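(* Let $n$ be a non-negative integer and let $x$ be an odd integer with $x\neq\pm1$. Let $P_n$ denote the $n$-th Legendre polynomial, $P_n(x)=\frac{1}{2^n}\sum_{k=0}^{n}\binom{n}{k}^2(x+1)^k(x-1)^{n-k}$. Then $$\omega_x\big(P_{2n+1}(x)\big)=1+\omega_x\Big((2n+1)\binom{2n}{n}\Big),\qquad \omega_x\big(P_{2n}(x)\big)=\omega_x\Big(\binom{2n}{n}\Big).$$
   Context: For an integer $x$ with $x\neq 0,\pm1$ and a nonzero integer $y$, $\omega_x(y)$ denotes the largest non-negative integer $e$ such that $x^e$ divides $y$. (For odd $x$, $P_n(x)$ is an integer.) *)

From mathcomp Require Import all_boot all_order all_algebra.
Set Implicit Arguments. Unset Strict Implicit. Unset Printing Implicit Defensive.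
Import Order.TTheory GRing.Theory Num.Theory.
Local Open Scope ring_scope.

(* The sum is computed exactly in int and divided by 2^n with integer
   division; for odd x the division is exact, so this is P_n(x). *)
Definition legendre (n : nat) (x : int) : int :=
  ((\sum_(k < n.+1) ('C(n, k) ^ 2)%N%:Z * (x + 1) ^+ k * (x - 1) ^+ (n - k))
     %/ (2 ^+ n))%Z.

(* omega_x(y): largest e with x^e | y.  For |x| >= 2 and y <> 0 any such e
   satisfies e <= |y|, so a bounded search over e < |y|+1 is exact. *)
Definition omega (x y : int) : nat :=
  (\max_(e < (`|y|%N).+1 | (x ^+ e %| y)%Z) e)%N.

From mathcomp Require Import all_boot all_order all_algebra.
From mathcomp Require Import zify ring.
Import Order.TTheory GRing.Theory Num.Theory.

(* 2^N P_N(x) is the coefficient of X^N in (X + x - 1)^N (X + x + 1)^N = ((X + x)^2 - 1)^N,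
   that is  \sum_i (-1)^(N-i) C(N,i) C(2i,N) x^(2i-N).  Let c = ceil(N/2) and e = 2c - N,
   which is 0 or 1.  The terms with i < c vanish, and for i = c + j the number
   C(N,i) C(2i,N) (2j+e)! is a multiple of the central coefficient a = C(N,c) C(2c,N).
   As an odd prime p divides m! at most m/2 times, the odd number x loses at most j of its
   factors to (2j+e)!, so x^(omega_x(a) + j + e) divides the term of index c + j.  For j > 0
   this beats the central term, whence omega_x(P_N(x)) = omega_x(a) + e, 2^N being prime
   to x. *)

Set Implicit Arguments.
Unset Strict Implicit.
Unset Printing Implicit Defensive.

Lemma sum_div_expS_le p m K : 2 < p -> 2 * \sum_(0 <= k < K) m %/ p ^ k.+1 <= m.
Proof.
move=> p_gt2; elim: K m => [|K IHK] m; first by rewrite big_geq.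
rewrite big_nat_recl // expn1.
under eq_bigr do rewrite expnS divnMA.
have := IHK (m %/ p); have := leq_divM m p; nia.
Qed.

Lemma logn_fact_le_half p m : prime p -> 2 < p -> logn p m`! <= m./2.
Proof.
move=> p_pr p_gt2; rewrite logn_fact // big_add1 /=.
have := sum_div_expS_le m m p_gt2; lia.
Qed.

Lemma dvdn_exp_mul_fact X a f e : odd X -> X ^ f %| a * e`! ->
  X ^ (f + uphalf e) %| a * X ^ e.
Proof.
move=> oddX dvd_fa.
have X_gt0 : 0 < X by case: X oddX {dvd_fa}.
have [->|a_gt0] := posnP a; first by rewrite mul0n dvdn0.
apply/dvdn_partP => [|p]; first by rewrite expn_gt0 X_gt0.
rewrite mem_primes => /and3P[p_pr _]; rewrite Euclid_dvdX // => /andP[p_dvd_X _].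
have p_gt2 : 2 < p.
  rewrite ltn_neqAle prime_gt1 // andbT; apply: contraTneq p_dvd_X => <-.
  by rewrite dvdn2 oddX.
have v_gt0 : 0 < logn p X by rewrite logn_gt0 mem_primes p_pr X_gt0.
have afact_gt0 : 0 < a * e`! by rewrite muln_gt0 a_gt0 fact_gt0.
have := dvdn_leq_log p afact_gt0 dvd_fa.
have := logn_fact_le_half e p_pr p_gt2.
rewrite p_part pfactor_dvdn ?muln_gt0 ?a_gt0 ?expn_gt0 ?X_gt0 //.
rewrite !lognM ?a_gt0 ?fact_gt0 ?expn_gt0 ?X_gt0 // !lognX.
have := leq_pmulr e./2 v_gt0; have : e = uphalf e + e./2 by lia.
nia.
Qed.

Definition legendre_coef N i := 'C(N, i) * 'C(i.*2, N).

Lemma legendre_coef_fact N i : i <= N <= i.*2 ->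
  legendre_coef N i * (i.*2 - N)`! * (i`! * (N - i)`!) = (i.*2)`!.
Proof.
case/andP=> le_iN le_Ni; rewrite -(bin_fact le_Ni) -(bin_fact le_iN) /legendre_coef.
ring.
Qed.

Lemma legendre_coef_factS N i : N <= i.*2 ->
  legendre_coef N i.+1 * (i.+1.*2 - N)`!
  = legendre_coef N i * (i.*2 - N)`! * ((i.*2).+1 * (N - i)).*2.
Proof.
move=> le_Ni; have [le_Ni'|lt_iN] := leqP N i.
  by rewrite /legendre_coef bin_small ?ltnS // (_ : N - i = 0) ?muln0 //; lia.
have K_gt0 : 0 < i.+1`! * (N - i.+1)`! by rewrite muln_gt0 !fact_gt0.
apply/eqP; rewrite -(eqn_pmul2r K_gt0) legendre_coef_fact; last by lia.
rewrite doubleS !factS -(@legendre_coef_fact N i); last by lia.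
have -> : N - i = (N - i.+1).+1 by lia.
rewrite factS -!mul2n; apply/eqP; ring.
Qed.

Lemma dvdn_legendre_coef_fact N c j : N <= c.*2 ->
  legendre_coef N c * (c.*2 - N)`! %| legendre_coef N (c + j) * ((c + j).*2 - N)`!.
Proof.
move=> le_Nc; elim: j => [|j IHj]; first by rewrite addn0.
by rewrite addnS legendre_coef_factS; [exact: dvdn_mulr | lia].
Qed.

Lemma dvdn_legendre_coef_exp X N f j : odd X -> 0 < j ->
  X ^ f %| legendre_coef N (uphalf N) ->
  X ^ (f + ((uphalf N).*2 - N)).+1 %|
    legendre_coef N (uphalf N + j) * X ^ ((uphalf N + j).*2 - N).
Proof.
move=> oddX j_gt0 dvd_f; set c := uphalf N.
have le_Nc : N <= c.*2 by rewrite -leq_uphalf_double.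
have fact_ec : (c.*2 - N)`! = 1.
  have : c.*2 - N <= 1 by lia.
  by case: (c.*2 - N) => [|[]].
have dvd_fact : X ^ f %| legendre_coef N (c + j) * ((c + j).*2 - N)`!.
  apply: dvdn_trans dvd_f (dvdn_trans _ (dvdn_legendre_coef_fact j le_Nc)).
  by rewrite fact_ec muln1.
apply: dvdn_trans (dvdn_exp_mul_fact oddX dvd_fact).
by rewrite dvdn_exp2l //; lia.
Qed.

Local Open Scope ring_scope.

Lemma coef_XaddC_exp (R : comNzRingType) (c : R) n k :
  (('X + c%:P) ^+ n)`_k = c ^+ (n - k) *+ 'C(n, k).
Proof.
rewrite addrC exprDn coef_sum.
under eq_bigr => i _ do rewrite coefMn -polyC_exp coefCM coefXn mulr_natr mulrb
  eq_sym (fun_if (fun y => y *+ 'C(n, i))) mul0rn.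
rewrite -big_mkcond (big_ord1_eq _ (fun i => c ^+ (n - i) *+ 'C(n, i))).
by case: ltnP => // lt_nk; rewrite bin_small ?mulr0n.
Qed.

Lemma legendre_sum_expand (R : comNzRingType) (x : R) N :
  \sum_(k < N.+1) ('C(N, k) ^ 2)%:R * (x + 1) ^+ k * (x - 1) ^+ (N - k)
  = \sum_(i < N.+1) (-1) ^+ (N - i) * (legendre_coef N i)%:R * x ^+ (i.*2 - N).
Proof.
pose q := ('X + (x - 1)%:P) ^+ N * ('X + (x + 1)%:P) ^+ N.
have -> : \sum_(k < N.+1) ('C(N, k) ^ 2)%:R * (x + 1) ^+ k * (x - 1) ^+ (N - k) = q`_N.
  rewrite coefM; apply: eq_bigr => -[k /= le_kN] _.
  by rewrite !coef_XaddC_exp bin_sub // subKn //; ring.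
have -> : q = ((-1)%:P + ('X + x%:P) ^+ 2) ^+ N.
  by rewrite /q -exprMn !rmorphD rmorphN /= polyCN polyC1; congr (_ ^+ _); ring.
rewrite exprDn coef_sum; apply: eq_bigr => -[i /= _] _.
rewrite coefMn -exprM -polyC_exp coefCM mul2n coef_XaddC_exp.
rewrite /legendre_coef natrM; ring.
Qed.

Section Omega.

Variable x : int.
Hypothesis x_gt1 : (1 < `|x|)%N.

Lemma dvdz_exp_leq_absz y e : y != 0 -> (x ^+ e %| y)%Z -> (e <= `|y|)%N.
Proof.
move=> y_neq0; rewrite dvdzE abszX => /dvdn_leq; rewrite absz_gt0 y_neq0 => /(_ isT).
by move=> le_xe_y; exact: ltnW (leq_trans (ltn_expl e x_gt1) le_xe_y).
Qed.

Lemma dvdz_omega y : (x ^+ omega x y %| y)%Z.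
Proof.
rewrite /omega (bigop.bigmax_eq_arg ord0) ?dvd1z //.
by case: arg_maxnP; rewrite ?dvd1z.
Qed.

Lemma dvdz_exp_omega y e : y != 0 -> (x ^+ e %| y)%Z = (e <= omega x y)%N.
Proof.
move=> y_neq0; apply/idP/idP => [dvd_ey | le_e].
  have lt_e : (e < (`|y|%N).+1)%N by rewrite ltnS dvdz_exp_leq_absz.
  exact: (bigop.leq_bigmax_cond (Ordinal lt_e)).
exact: dvdz_trans (dvdz_exp2l x le_e) (dvdz_omega y).
Qed.

Lemma omega_eq y e : (x ^+ e %| y)%Z -> ~~ (x ^+ e.+1 %| y)%Z -> omega x y = e.
Proof.
move=> dvd_e ndvd_eS; have y_neq0 : y != 0 by apply: contraNneq ndvd_eS => ->.
move: dvd_e ndvd_eS; rewrite !dvdz_exp_omega //; lia.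
Qed.

Lemma omega_Gauss u y : coprime `|x| `|u| -> omega x (u * y) = omega x y.
Proof.
move=> co_xu; have [->|y_neq0] := eqVneq y 0; first by rewrite mulr0.
apply: omega_eq; first exact/dvdz_mull/dvdz_omega.
by rewrite Gauss_dvdzr ?coprimezE ?abszX ?coprimeXl // dvdz_exp_omega // ltnn.
Qed.

Lemma omegaMexp y e : y != 0 -> omega x (y * x ^+ e) = (omega x y + e)%N.
Proof.
move=> y_neq0; apply: omega_eq; first by rewrite exprD dvdz_mul ?dvdz_omega.
have x_neq0 : x ^+ e != 0 by rewrite expf_neq0 // -absz_gt0; lia.
by rewrite -addSn exprD dvdz_mul2r // dvdz_exp_omega // ltnn.
Qed.

Lemma omegaD_dvdr y z : y != 0 -> (x ^+ (omega x y).+1 %| z)%Z ->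
  y + z != 0 /\ omega x (y + z) = omega x y.
Proof.
move=> y_neq0 dvd_z.
have ndvd_y : ~~ (x ^+ (omega x y).+1 %| y)%Z by rewrite dvdz_exp_omega // ltnn.
have ndvd_yz : ~~ (x ^+ (omega x y).+1 %| y + z)%Z.
  by apply: contraNN ndvd_y => dvd_yz; have := rpredB dvd_yz dvd_z; rewrite addrK.
split; first by apply: contraNneq ndvd_yz => ->; rewrite dvdz0.
apply: omega_eq ndvd_yz; rewrite rpredD ?dvdz_omega //.
exact: dvdz_trans (dvdz_exp2l x (leqnSn _)) dvd_z.
Qed.

End Omega.

Lemma legendreE N (x : int) : odd `|x|%N ->
  legendre N x * 2 ^+ N
  = \sum_(i < N.+1) (-1) ^+ (N - i) * (legendre_coef N i)%:Z * x ^+ (i.*2 - N).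
Proof.
move=> odd_x; rewrite /legendre divzK.
  transitivity (\sum_(k < N.+1)
      ('C(N, k) ^ 2)%:R * (x + 1) ^+ k * (x - 1) ^+ (N - k) : int).
    by apply: eq_bigr => k _; rewrite natz.
  by rewrite legendre_sum_expand; apply: eq_bigr => i _; rewrite natz.
apply: rpred_sum => -[k /=]; rewrite ltnS => le_kN _; rewrite -mulrA dvdz_mull //.
rewrite -(subnKC le_kN) exprD subnKC //; apply: dvdz_mul; apply: dvdz_exp2r; lia.
Qed.

Lemma dvdz_legendre_term N (x : int) i : odd `|x|%N -> i != uphalf N ->
  (x ^+ (omega x (legendre_coef N (uphalf N))%:Z + ((uphalf N).*2 - N)).+1
    %| (legendre_coef N i)%:Z * x ^+ (i.*2 - N))%Z.
Proof.
move=> odd_x ne_ic; set c := uphalf N.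
have [lt_ic | le_ci] := ltnP i c.
  by rewrite /legendre_coef (@bin_small i.*2) ?muln0 ?mul0r ?dvdz0 //; lia.
have j_gt0 : (0 < i - c)%N by lia.
have := dvdz_omega x (legendre_coef N c)%:Z; rewrite dvdzE abszX absz_nat => dvd_a.
rewrite -(subnKC le_ci) dvdzE abszM !abszX absz_nat.
exact: dvdn_legendre_coef_exp odd_x j_gt0 dvd_a.
Qed.

Lemma legendre_omega N (x : int) : odd `|x|%N -> (1 < `|x|)%N ->
  legendre N x != 0 /\
  omega x (legendre N x)
  = (omega x (legendre_coef N (uphalf N))%:Z + ((uphalf N).*2 - N))%N.
Proof.
move=> odd_x x_gt1; set c := uphalf N; set a := (legendre_coef N c)%:Z.
have x_neq0 : x != 0 by rewrite -absz_gt0; lia.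
have a_neq0 : a != 0.
  by rewrite eqz_nat -lt0n muln_gt0 !bin_gt0; apply/andP; split; lia.
pose t i : int := (-1) ^+ (N - i) * (legendre_coef N i)%:Z * x ^+ (i.*2 - N).
have lt_cN : (c < N.+1)%N by lia.
have split_t : legendre N x * 2 ^+ N
    = t c + \sum_(i < N.+1 | i != Ordinal lt_cN) t i.
  by rewrite legendreE // (bigD1 (Ordinal lt_cN)).
have t_c : t c = (-1) ^+ (N - c) * (a * x ^+ (c.*2 - N)) by rewrite /t mulrA.
have t_c_neq0 : t c != 0 by rewrite t_c !mulf_neq0 ?signr_neq0 ?expf_neq0.
have omega_t_c : omega x (t c) = (omega x a + (c.*2 - N))%N.
  by rewrite t_c omega_Gauss ?omegaMexp // abszX exp1n coprimen1.
have dvd_rest : (x ^+ (omega x (t c)).+1 %| \sum_(i < N.+1 | i != Ordinal lt_cN) t i)%Z.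
  apply: rpred_sum => i ne_ic; rewrite /t -mulrA dvdz_mull // omega_t_c.
  exact: dvdz_legendre_term odd_x ne_ic.
have [sum_neq0 omega_sum] := omegaD_dvdr x_gt1 t_c_neq0 dvd_rest.
rewrite -split_t in sum_neq0 omega_sum; split.
  by apply: contraNneq sum_neq0 => ->; rewrite mul0r.
rewrite -omega_t_c -omega_sum mulrC omega_Gauss //.
by rewrite abszX coprimeXr // coprimen2.
Qed.

Lemma legendre_coef_double n : legendre_coef n.*2 n = 'C(n.*2, n).
Proof. by rewrite /legendre_coef binn muln1. Qed.

Lemma legendre_coef_doubleS n :
  legendre_coef n.*2.+1 n.+1 = (2 * (n.*2.+1 * 'C(n.*2, n)))%N.
Proof.
rewrite /legendre_coef doubleS binSn (mul_bin_diag n.*2.+1 n) -doubleS.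
by rewrite -[n.+1.*2]mul2n; ring.
Qed.

Theorem corollary7 (n : nat) (x : int) (hodd : odd `|x|%N) (hx : x != 1)
    (hx' : x != -1) :
  legendre n.*2.+1 x != 0 /\ legendre n.*2 x != 0 /\
  omega x (legendre n.*2.+1 x) = (1 + omega x ((n.*2.+1 * 'C(n.*2, n))%N%:Z))%N /\
  omega x (legendre n.*2 x) = omega x ('C(n.*2, n)%:Z).
Proof.
have x_gt1 : (1 < `|x|)%N by lia.
have [odd_neq0 ->] := legendre_omega n.*2.+1 hodd x_gt1.
have [even_neq0 ->] := legendre_omega n.*2 hodd x_gt1.
have -> : uphalf n.*2.+1 = n.+1 by lia.
rewrite uphalf_double legendre_coef_double legendre_coef_doubleS subnn addn0.
by rewrite PoszM omega_Gauss ?coprimen2 // doubleS subSS subSnn addnC; do !split.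
Qed.
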